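(* Assume $\mathbf a,\mathbf b\in\Delta^n$ with strictly positive entries, let $\eta>0$, let $X^\eta$ be the unique minimizer of $g_\eta$ over $\mathbb{R}^{n\times n}_+$, and set $\gamma=\|C\|_\infty+2\eta$. Then for all $i,j\in[n]$: $$a_ie^{-\gamma/\tau}\le\sum_{k=1}^nX^\eta_{ik}\le1-e^{-\gamma/\tau}(1-a_i),\qquad b_je^{-\gamma/\tau}\le\sum_{k=1}^nX^\eta_{kj}\le1-e^{-\gamma/\tau}(1-b_j).$$
   Context: Let $n\ge1$, $C\in\mathbb{R}^{n\times n}$ with nonnegative entries and $\|C\|_\infty=\max_{i,j}|C_{ij}|$; $\tau>0$; $\Delta^n=\{\mathbf x\in\mathbb{R}^n_+:\sum_i x_i=1\}$. For $\mathbf x\in\mathbb{R}^n_+$ and $\mathbf y$ with positive entries, $\mathbf{KL}(\mathbf x\|\mathbf y)=\sum_i x_i\log(x_i/y_i)-x_i+y_i$ (with $0\log0=0$). $\|X\|_2$ is the Frobenius norm, $\mathbf 1_n$ the all-ones vector. $g_\eta(X)=\langle C,X\rangle+\eta\|X\|_2^2+\tau\mathbf{KL}(X\mathbf 1_n\|\mathbf a)+\tau\mathbf{KL}(X^\top\mathbf 1_n\|\mathbf b)$ for $X\in\mathbb{R}^{n\times n}_+$. *)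

From HB Require Import structures.
From mathcomp Require Import all_boot all_order all_algebra.
From mathcomp Require Import all_classical all_reals all_analysis.
Set Implicit Arguments. Unset Strict Implicit. Unset Printing Implicit Defensive.
Import Order.TTheory GRing.Theory Num.Theory.
Local Open Scope ring_scope.

Section Defs.
Variable R : realType.
Variable n : nat.

Definition xlogxy (x y : R) : R := if x == 0 then 0 else x * ln (x / y).

Definition KL (x y : 'I_n -> R) : R :=
  \sum_(i < n) (xlogxy (x i) (y i) - x i + y i).

Definition rowsum (X : 'M[R]_n) : 'I_n -> R := fun i => \sum_(k < n) X i k.
Definition colsum (X : 'M[R]_n) : 'I_n -> R := fun j => \sum_(k < n) X k j.

Definition frob2 (X : 'M[R]_n) : R := \sum_(i < n) \sum_(j < n) X i j ^+ 2.

Definition mxdot (C X : 'M[R]_n) : R := \sum_(i < n) \sum_(j < n) C i j * X i j.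

Definition mxinfnorm (C : 'M[R]_n) : R :=
  \big[Num.max/0]_(i < n) \big[Num.max/0]_(j < n) `|C i j|.

Definition nonneg_mx (X : 'M[R]_n) : Prop := forall i j, 0 <= X i j.

Definition g_obj (C : 'M[R]_n) (tau eta : R) (a b : 'I_n -> R) (X : 'M[R]_n) : R :=
  mxdot C X + eta * frob2 X + tau * KL (rowsum X) a + tau * KL (colsum X) b.

End Defs.

From HB Require Import structures.
From mathcomp Require Import all_boot all_order all_algebra.
From mathcomp Require Import all_classical all_reals all_analysis.
From mathcomp Require Import ring lra.
Set Implicit Arguments. Unset Strict Implicit. Unset Printing Implicit Defensive.
Import Order.TTheory GRing.Theory Num.Theory.
Local Open Scope ring_scope.

(* Two competitors to the minimizer X give first-order conditions.  Comparing with
   (1 - t) X and letting t -> 0 gives sum_k r_k ln (r_k / a_k) + sum_l c_l ln (c_l / b_l) <= 0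
   for the marginals r, c of X, so by Gibbs' inequality the mass of X is at most 1; in
   particular X_kl <= 1.  Comparing with X + t e_kl and letting t -> 0 gives
   r_k c_l >= a_k b_l exp (-(C_kl + 2 eta X_kl) / tau) >= a_k b_l exp (-gamma / tau).
   Summing over l, r_k >= r_k * mass >= a_k exp (-gamma / tau); the upper bounds follow by
   subtracting the lower bounds of the other marginals from mass <= 1. *)

Section RealFacts.
Variable R : realType.

Lemma ln_le_subr1 (x : R) : 0 < x -> ln x <= x - 1.
Proof.
by move=> x0; have := @le_ln1Dx R (x - 1); rewrite [1 + _]addrC subrK; apply; lra.
Qed.

Lemma ln_div (x y : R) : 0 < x -> 0 < y -> ln (x / y) = ln x - ln y.
Proof. by move=> x0 y0; rewrite lnM ?posrE ?invr_gt0 // lnV ?posrE. Qed.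

Lemma mulr_ln_div_le (x y : R) : 0 < x -> 0 < y -> y * ln (x / y) <= x - y.
Proof.
move=> x0 y0; have := ler_wpM2l (ltW y0) (ln_le_subr1 (divr_gt0 x0 y0)).
by rewrite mulrBr mulr1 mulrCA divff ?gt_eqF // mulr1.
Qed.

Lemma ler_perturb (A B D : R) :
  (forall t, 0 < t -> t < 1 -> A <= B + t * D) -> A <= B.
Proof.
move=> hA; apply/ler_addgt0Pr => e e0.
have D1 : 0 < `|D| + 1 by rewrite ltr_wpDl.
pose t := Num.min (1/2) (e / (`|D| + 1)).
have t0 : 0 < t by rewrite lt_min divr_gt0 // divr_gt0.
have t1 : t < 1 by rewrite gt_min; apply/orP; left; lra.
have te : t * (`|D| + 1) <= e by rewrite -ler_pdivlMr // ge_min lexx orbT.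
have : t * D <= t * `|D| by rewrite ler_wpM2l ?ler_norm ?ltW.
have := hA t t0 t1; nra.
Qed.

End RealFacts.

Section EntropyTerm.
Variable R : realType.
Implicit Types r s t a : R.

Lemma xlogxy_ge_sub r a : 0 <= r -> 0 < a -> r - a <= xlogxy r a.
Proof.
move=> r0 a0; rewrite /xlogxy; case: eqP => [->|/eqP rn0]; first lra.
have rp : 0 < r by rewrite lt0r rn0.
have := mulr_ln_div_le a0 rp; rewrite -[ln (a / r)]opprK -lnV ?posrE ?divr_gt0 //.
by rewrite invf_div; lra.
Qed.

Lemma xlogxy_scale s r a : 0 < s -> 0 <= r -> 0 < a ->
  xlogxy (s * r) a = s * xlogxy r a + s * r * ln s.
Proof.
move=> s0 r0 a0; rewrite /xlogxy mulf_eq0 gt_eqF //=; case: eqP => [->|/eqP rn0].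
  by rewrite !mulr0 mul0r addr0.
have rp : 0 < r by rewrite lt0r rn0.
rewrite -[s * r / a]mulrA lnM ?posrE ?divr_gt0 //; ring.
Qed.

(* Convexity of [x ln (x/a) - x], whose slope at [r + t] is [ln ((r + t)/a)]. *)
Lemma xlogxy_shift_le r t a : 0 <= r -> 0 < t -> 0 < a ->
  (xlogxy (r + t) a - (r + t)) - (xlogxy r a - r) <= t * ln ((r + t) / a).
Proof.
move=> r0 t0 a0; have rt : 0 < r + t by rewrite ltr_wpDl.
rewrite /xlogxy gt_eqF //; case: eqP => [->|/eqP rn0]; first by rewrite add0r; lra.
have rp : 0 < r by rewrite lt0r rn0.
have := mulr_ln_div_le rt rp; rewrite !ln_div //; lra.
Qed.

Lemma xlogxy_scale_le t r a : 0 < t < 1 -> 0 <= r -> 0 < a ->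
  (xlogxy ((1 - t) * r) a - (1 - t) * r) - (xlogxy r a - r)
    <= - t * xlogxy r a + t ^+ 2 * r.
Proof.
move=> /andP[t0 t1] r0 a0; rewrite xlogxy_scale ?subr_gt0 //.
have : ln (1 - t) <= - t by have := ln_le_subr1 (_ : 0 < 1 - t); lra.
have : 0 <= (1 - t) * r by apply: mulr_ge0; lra.
nra.
Qed.

End EntropyTerm.

Section Sums.
Variables (R : realType) (n : nat).
Implicit Types (C X : 'M[R]_n).

Lemma sum_differ_at (F G : 'I_n -> R) k : (forall i, i != k -> F i = G i) ->
  \sum_(i < n) F i = \sum_(i < n) G i + (F k - G k).
Proof.
move=> FG; rewrite (bigD1 k) //= [\sum_(i < n) G i](bigD1 k) //=.
by rewrite (eq_bigr G (fun i ik => FG i ik)); ring.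
Qed.

Lemma shiftE X t k l i j :
  (X + t *: delta_mx k l) i j = X i j + t * ((i == k) && (j == l))%:R.
Proof. by rewrite !mxE. Qed.

Lemma sum_mx_shift (F : 'I_n -> 'I_n -> R -> R) X k l t :
  \sum_(i < n) \sum_(j < n) F i j ((X + t *: delta_mx k l) i j)
  = \sum_(i < n) \sum_(j < n) F i j (X i j) + (F k l (X k l + t) - F k l (X k l)).
Proof.
rewrite (sum_differ_at (G := fun i => \sum_(j < n) F i j (X i j)) (k := k))
  => [|i /negbTE ik]; last first.
  by apply: eq_bigr => j _; rewrite shiftE ik mulr0 addr0.
congr (_ + _); rewrite (sum_differ_at (G := fun j => F k j (X k j)) (k := l))
  => [|j /negbTE jl]; last first.
  by rewrite shiftE eqxx jl mulr0 addr0.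
by rewrite !shiftE !eqxx mulr1; ring.
Qed.

Lemma mxdot_shift C X k l t : mxdot C (X + t *: delta_mx k l) = mxdot C X + t * C k l.
Proof. by rewrite /mxdot (sum_mx_shift (fun i j x => C i j * x)); congr (_ + _); ring. Qed.

Lemma frob2_shift X k l t : frob2 (X + t *: delta_mx k l) = frob2 X + t * (2 * X k l + t).
Proof. by rewrite /frob2 (sum_mx_shift (fun _ _ x => x ^+ 2)); congr (_ + _); ring. Qed.

Lemma rowsum_shift X t k l :
  rowsum (X + t *: delta_mx k l) = fun i => rowsum X i + t * (i == k)%:R.
Proof.
apply: funext => i; rewrite /rowsum (sum_differ_at (G := X i) (k := l))
  => [|j /negbTE jl]; last first.
  by rewrite shiftE jl andbF mulr0 addr0.
by rewrite shiftE eqxx andbT; ring.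
Qed.

Lemma colsum_shift X t k l :
  colsum (X + t *: delta_mx k l) = fun j => colsum X j + t * (j == l)%:R.
Proof.
apply: funext => j; rewrite /colsum (sum_differ_at (G := X^~ j) (k := k))
  => [|i /negbTE ik]; last first.
  by rewrite shiftE ik mulr0 addr0.
by rewrite shiftE eqxx; ring.
Qed.

Lemma mxdotZ s C X : mxdot C (s *: X) = s * mxdot C X.
Proof.
rewrite /mxdot mulr_sumr; apply: eq_bigr => i _; rewrite mulr_sumr.
by apply: eq_bigr => j _; rewrite mxE mulrCA.
Qed.

Lemma frob2Z s X : frob2 (s *: X) = s ^+ 2 * frob2 X.
Proof.
rewrite /frob2 mulr_sumr; apply: eq_bigr => i _; rewrite mulr_sumr.
by apply: eq_bigr => j _; rewrite mxE exprMn.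
Qed.

Lemma rowsumZ s X : rowsum (s *: X) = fun i => s * rowsum X i.
Proof.
by apply: funext => i; rewrite /rowsum mulr_sumr; apply: eq_bigr => j _; rewrite mxE.
Qed.

Lemma colsumZ s X : colsum (s *: X) = fun j => s * colsum X j.
Proof.
by apply: funext => j; rewrite /colsum mulr_sumr; apply: eq_bigr => i _; rewrite mxE.
Qed.

Lemma sum_colsum X : \sum_(j < n) colsum X j = \sum_(i < n) rowsum X i.
Proof. exact: exchange_big. Qed.

Lemma mxinfnorm_ge C i j : `|C i j| <= mxinfnorm C.
Proof.
apply: le_trans (le_bigmax _ _ i); exact: (le_bigmax _ (fun j => `|C i j|) j).
Qed.

Definition xlogxy_sum (u w : 'I_n -> R) : R := \sum_(i < n) xlogxy (u i) (w i).

Lemma xlogxy_sum_ge (u w : 'I_n -> R) : (forall i, 0 <= u i) -> (forall i, 0 < w i) ->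
  \sum_(i < n) u i - \sum_(i < n) w i <= xlogxy_sum u w.
Proof. by move=> u0 w0; rewrite -sumrB; apply: ler_sum => i _; apply: xlogxy_ge_sub. Qed.

Lemma KL_scale_le (u w : 'I_n -> R) t : 0 < t < 1 ->
  (forall i, 0 <= u i) -> (forall i, 0 < w i) ->
  KL (fun i => (1 - t) * u i) w
    <= KL u w - t * xlogxy_sum u w + t ^+ 2 * \sum_(i < n) u i.
Proof.
move=> t01 u0 w0.
suff : KL (fun i => (1 - t) * u i) w - KL u w
         <= - t * xlogxy_sum u w + t ^+ 2 * \sum_(i < n) u i by lra.
rewrite /KL /xlogxy_sum -sumrB !mulr_sumr -big_split /=.
by apply: ler_sum => i _; have := xlogxy_scale_le t01 (u0 i) (w0 i); lra.
Qed.

Lemma KL_shift_le (u w : 'I_n -> R) k t : 0 <= u k -> 0 < t -> 0 < w k ->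
  KL (fun i => u i + t * (i == k)%:R) w <= KL u w + t * ln ((u k + t) / w k).
Proof.
move=> uk0 t0 wk0.
rewrite /KL (sum_differ_at (G := fun i => xlogxy (u i) (w i) - u i + w i) (k := k))
  => [|i /negbTE ik]; last by rewrite ik mulr0 addr0.
by rewrite eqxx mulr1; have := xlogxy_shift_le uk0 t0 wk0; lra.
Qed.

Lemma upper_bound_from_lower_bounds (u w : 'I_n -> R) E i :
  \sum_(k < n) u k <= 1 -> \sum_(k < n) w k = 1 -> (forall k, w k * E <= u k) ->
  u i <= 1 - E * (1 - w i).
Proof.
move=> su sw uge.
have -> : 1 - w i = \sum_(k < n | k != i) w k by rewrite -sw (bigD1 i) //=; ring.
have : \sum_(k < n | k != i) w k * E <= \sum_(k < n | k != i) u k by apply: ler_sum.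
by rewrite (bigD1 i) //= in su; rewrite -mulr_suml; lra.
Qed.

End Sums.

Section Minimizer.
Variables (R : realType) (n : nat) (C : 'M[R]_n) (tau eta : R) (a b : 'I_n -> R).
Variable X : 'M[R]_n.
Hypotheses (C_ge0 : forall i j, 0 <= C i j) (tau_gt0 : 0 < tau) (eta_ge0 : 0 <= eta).
Hypotheses (a_gt0 : forall i, 0 < a i) (sum_a : \sum_(i < n) a i = 1).
Hypotheses (b_gt0 : forall j, 0 < b j) (sum_b : \sum_(j < n) b j = 1).
Hypotheses (X_ge0 : nonneg_mx X)
  (X_min : forall Y, nonneg_mx Y -> g_obj C tau eta a b X <= g_obj C tau eta a b Y).

Local Notation mass := (\sum_(i < n) rowsum X i).
Let E := expR (- (mxinfnorm C + 2 * eta) / tau).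

Lemma rowsum_ge0 i : 0 <= rowsum X i.
Proof. by apply: sumr_ge0 => j _; apply: X_ge0. Qed.

Lemma colsum_ge0 j : 0 <= colsum X j.
Proof. by apply: sumr_ge0 => i _; apply: X_ge0. Qed.

(* Compare with the feasible [(1 - t) X] and let [t -> 0]. *)
Lemma xlogxy_sums_le0 : xlogxy_sum (rowsum X) a + xlogxy_sum (colsum X) b <= 0.
Proof.
apply: (@ler_perturb _ _ _ (2 * mass)) => t t0 t1.
have t01 : 0 < t < 1 by rewrite t0 t1.
have Y0 : nonneg_mx ((1 - t) *: X).
  by move=> i j; rewrite mxE mulr_ge0 // subr_ge0 ltW.
have hr := ler_wpM2l (ltW tau_gt0) (KL_scale_le t01 rowsum_ge0 a_gt0).
have hc := ler_wpM2l (ltW tau_gt0) (KL_scale_le t01 colsum_ge0 b_gt0).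
have hdot : (1 - t) * mxdot C X <= mxdot C X.
  have : 0 <= mxdot C X by do 2![apply: sumr_ge0 => ? _]; apply: mulr_ge0.
  nra.
have hfrob : eta * ((1 - t) ^+ 2 * frob2 X) <= eta * frob2 X.
  have F0 : 0 <= frob2 X by do 2![apply: sumr_ge0 => ? _]; apply: sqr_ge0.
  apply: ler_wpM2l => //; have : 0 <= t * (2 - t) * frob2 X by rewrite mulr_ge0 //; nra.
  nra.
have := X_min Y0; rewrite /g_obj mxdotZ frob2Z rowsumZ colsumZ.
rewrite sum_colsum in hc.
set Sr := xlogxy_sum _ _ in hr *; set Sc := xlogxy_sum _ _ in hc *.
move=> hg; have : 0 <= tau * (t * (2 * t * mass - (Sr + Sc))).
  have -> : tau * (t * (2 * t * mass - (Sr + Sc)))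
    = tau * (- t * Sr + t ^+ 2 * mass) + tau * (- t * Sc + t ^+ 2 * mass) by ring.
  lra.
by rewrite !pmulr_rge0 //; lra.
Qed.

Lemma mass_le1 : mass <= 1.
Proof.
have := xlogxy_sum_ge rowsum_ge0 a_gt0; have := xlogxy_sum_ge colsum_ge0 b_gt0.
by rewrite sum_colsum sum_a sum_b; have := xlogxy_sums_le0; lra.
Qed.

Lemma entry_le1 i j : X i j <= 1.
Proof.
have Xr : X i j <= rowsum X i.
  by rewrite /rowsum (bigD1 j) //= lerDl sumr_ge0 // => k _; apply: X_ge0.
have rm : rowsum X i <= mass.
  by rewrite (bigD1 i) //= lerDl sumr_ge0 // => k _; apply: rowsum_ge0.
by have := mass_le1; lra.
Qed.

(* Compare with the feasible [X + t e_kl]; the [+ t] inside the logarithms avoids dividing by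
   a possibly vanishing marginal. *)
Lemma ln_marginals_ge k l t : 0 < t ->
  - (C k l + eta * (2 * X k l + t)) / tau
    <= ln ((rowsum X k + t) / a k) + ln ((colsum X l + t) / b l).
Proof.
move=> t0; have Y0 : nonneg_mx (X + t *: delta_mx k l).
  move=> i j; rewrite shiftE; apply: addr_ge0; first exact: X_ge0.
  by apply: mulr_ge0; [exact: ltW | exact: ler0n].
have hr := ler_wpM2l (ltW tau_gt0) (KL_shift_le (rowsum_ge0 k) t0 (a_gt0 k)).
have hc := ler_wpM2l (ltW tau_gt0) (KL_shift_le (colsum_ge0 l) t0 (b_gt0 l)).
have := X_min Y0; rewrite /g_obj mxdot_shift frob2_shift rowsum_shift colsum_shift.
set Lr := ln _ in hr; set Lc := ln _ in hc; move=> hg.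
have : 0 <= t * (C k l + eta * (2 * X k l + t) + tau * (Lr + Lc)).
  have -> : t * (C k l + eta * (2 * X k l + t) + tau * (Lr + Lc))
    = t * C k l + eta * (t * (2 * X k l + t)) + tau * (t * Lr) + tau * (t * Lc) by ring.
  lra.
by rewrite pmulr_rge0 // ler_pdivrMr // -/Lr -/Lc; lra.
Qed.

Lemma rowsum_mul_colsum_ge k l : a k * b l * E <= rowsum X k * colsum X l.
Proof.
set r := rowsum X k; set c := colsum X l.
apply: (@ler_perturb _ _ _ (r + c + 1 + a k * b l * E * eta / tau)) => t t0 t1.
have Ckl : C k l + eta * (2 * X k l + t) <= mxinfnorm C + 2 * eta + eta * t.
  have := mxinfnorm_ge C k l; rewrite ger0_norm ?C_ge0 //.
  have : 0 <= eta * (1 - X k l) by rewrite mulr_ge0 // subr_ge0 entry_le1.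
  lra.
have r0 : 0 <= r := rowsum_ge0 k.
have c0 : 0 <= c := colsum_ge0 l.
have rt : 0 < r + t by rewrite ltr_wpDl.
have ct : 0 < c + t by rewrite ltr_wpDl.
have hexp : E * expR (- (eta * t / tau)) <= (r + t) / a k * ((c + t) / b l).
  rewrite -[X in _ <= X]lnK; last by rewrite posrE mulr_gt0 ?divr_gt0.
  rewrite lnM ?posrE ?divr_gt0 //.
  rewrite -expRD ler_expR; apply: le_trans (ln_marginals_ge k l t0).
  have -> : - (mxinfnorm C + 2 * eta) / tau + - (eta * t / tau)
    = - (mxinfnorm C + 2 * eta + eta * t) / tau by ring.
  by rewrite ler_pM2r ?invr_gt0 // lerN2.
have hprod : a k * b l * (E * (1 - eta * t / tau)) <= (r + t) * (c + t).
  have -> : (r + t) * (c + t) = a k * b l * ((r + t) / a k * ((c + t) / b l)).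
    by field; rewrite !gt_eqF.
  apply: ler_wpM2l; first by rewrite ltW ?mulr_gt0.
  apply: le_trans hexp; apply: ler_wpM2l; first exact/ltW/expR_gt0.
  by have := expR_ge1Dx (- (eta * t / tau)); lra.
have : 0 <= t * t * (r + c + 1) by apply: mulr_ge0; nra.
have : t * t <= t by nra.
nra.
Qed.

Lemma rowsum_ge k : a k * E <= rowsum X k.
Proof.
apply: le_trans (_ : rowsum X k * mass <= _); last first.
  by rewrite ler_piMr ?rowsum_ge0 ?mass_le1.
rewrite -sum_colsum mulr_sumr -[a k * E]mulr1 -sum_b mulr_sumr.
by apply: ler_sum => l _; rewrite mulrAC; apply: rowsum_mul_colsum_ge.
Qed.

Lemma colsum_ge l : b l * E <= colsum X l.
Proof.
apply: le_trans (_ : mass * colsum X l <= _); last first.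
  by rewrite ler_piMl ?colsum_ge0 ?mass_le1.
rewrite mulr_suml -[b l * E]mul1r -sum_a mulr_suml.
by apply: ler_sum => k _; rewrite mulrA; apply: rowsum_mul_colsum_ge.
Qed.

Lemma marginal_bounds i j :
  a i * E <= rowsum X i <= 1 - E * (1 - a i) /\
  b j * E <= colsum X j <= 1 - E * (1 - b j).
Proof.
have row_ub := upper_bound_from_lower_bounds i mass_le1 sum_a rowsum_ge.
have col_ub := upper_bound_from_lower_bounds j _ sum_b colsum_ge.
by rewrite rowsum_ge colsum_ge row_ub col_ub // sum_colsum mass_le1.
Qed.

End Minimizer.

Theorem mainTheorem11 (R : realType) (n : nat) (C : 'M[R]_n) (tau eta : R)
  (a b : 'I_n -> R) (X : 'M[R]_n) :
  (0 < n)%N ->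
  (forall i j, 0 <= C i j) ->
  0 < tau ->
  (forall i, 0 < a i) -> \sum_(i < n) a i = 1 ->
  (forall j, 0 < b j) -> \sum_(j < n) b j = 1 ->
  0 < eta ->
  nonneg_mx X ->
  (forall Y : 'M[R]_n, nonneg_mx Y -> g_obj C tau eta a b X <= g_obj C tau eta a b Y) ->
  let gamma := mxinfnorm C + 2 * eta in
  forall i j : 'I_n,
    a i * expR (- gamma / tau) <= rowsum X i <= 1 - expR (- gamma / tau) * (1 - a i) /\
    b j * expR (- gamma / tau) <= colsum X j <= 1 - expR (- gamma / tau) * (1 - b j).
Proof.
move=> _ C_ge0 tau_gt0 a_gt0 sum_a b_gt0 sum_b eta_gt0 X_ge0 X_min gamma.
exact: (marginal_bounds C_ge0 tau_gt0 (ltW eta_gt0) a_gt0 sum_a b_gt0 sum_b X_ge0 X_min).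
Qed.
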